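(* Fix $x\in\mathbf{X}$ and let $(k_0,j_0)$ be the unique pair with $x\in\mathbf{X}_{k_0,j_0}$. Suppose OOD detectors satisfy $H_{OOD,k}(x)\le\delta_k$ for $k=1,\dots,T$ and the within-task prediction satisfies $H_{WP}(x)\le\epsilon$. Let the task-id prediction be $\mathbf{P}(x\in\mathbf{X}_k\mid D)=\frac{\mathbf{P}'_k(x\in\mathbf{X}_k\mid D)}{\sum_{k'}\mathbf{P}'_{k'}(x\in\mathbf{X}_{k'}\mid D)}$ and the class-incremental prediction be $\mathbf{P}(x\in\mathbf{X}_{k,j}\mid D)=\mathbf{P}(x\in\mathbf{X}_{k,j}\mid x\in\mathbf{X}_k,D)\,\mathbf{P}(x\in\mathbf{X}_k\mid D)$. Then $$H_{CIL}(x)\le\epsilon+\Big(\sum_k\mathbf{1}_{x\in\mathbf{X}_k}e^{\delta_k}\Big)\Big(\sum_k(1-e^{-\delta_k})\Big),$$ where $\mathbf{1}_{x\in\mathbf{X}_k}$ is the indicator of $x\in\mathbf{X}_k$.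
   Context: $\mathbf{X}$ is an input domain which is the disjoint union of task domains $\mathbf{X}_1,\dots,\mathbf{X}_T$, and each $\mathbf{X}_k$ is the disjoint union of class domains $\mathbf{X}_{k,j}$. $D$ is a fixed conditioning event. A within-task prediction (WP) gives, for each task $k$, a probability distribution $\{\mathbf{P}(x\in\mathbf{X}_{k,j}\mid x\in\mathbf{X}_k,D)\}_j$ over the classes of task $k$; $H_{WP}(x)=-\log\mathbf{P}(x\in\mathbf{X}_{k_0,j_0}\mid x\in\mathbf{X}_{k_0},D)$. $H_{CIL}(x)=-\log\mathbf{P}(x\in\mathbf{X}_{k_0,j_0}\mid D)$. An OOD detector for task $k$ is a value $\mathbf{P}'_k(x\in\mathbf{X}_k\mid D)\in[0,1]$ with $\mathbf{P}'_k(x\in\mathbf{X}\setminus\mathbf{X}_k\mid D)=1-\mathbf{P}'_k(x\in\mathbf{X}_k\mid D)$, and $H_{OOD,k}(x)=-\log\mathbf{P}'_k(x\in\mathbf{X}_k\mid D)$ if $x\in\mathbf{X}_k$, $H_{OOD,k}(x)=-\log\mathbf{P}'_k(x\in\mathbf{X}\setminus\mathbf{X}_k\mid D)$ otherwise. *)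

From mathcomp Require Import all_boot all_order all_algebra.
From mathcomp Require Import all_classical all_reals all_analysis.
Set Implicit Arguments.
Unset Strict Implicit.
Unset Printing Implicit Defensive.
Import Order.TTheory GRing.Theory Num.Theory.
Local Open Scope ring_scope.

Section Defs.
Variable R : realType.

Definition neglog (p : R) : \bar R :=
  if 0 < p then (- ln p)%:E else +oo%E.

Variables (X : Type) (T : nat) (n : 'I_T -> nat).
(* tsk x = the unique task k with x in X_k; cls x = the unique class j with x in X_{k,j} *)
Variable tsk : X -> 'I_T.
Variable cls : forall x : X, 'I_(n (tsk x)).

(* Pood k x = P'_k(x in X_k | D) *)
Definition H_OOD (Pood : 'I_T -> X -> R) (k : 'I_T) (x : X) : \bar R :=
  if tsk x == k then neglog (Pood k x) else neglog (1 - Pood k x).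

(* WP k x j = P(x in X_{k,j} | x in X_k, D) *)
Definition H_WP (WP : forall k : 'I_T, X -> 'I_(n k) -> R) (x : X) : \bar R :=
  neglog (WP (tsk x) x (cls x)).

Definition task_pred (Pood : 'I_T -> X -> R) (k : 'I_T) (x : X) : R :=
  Pood k x / \sum_(k' < T) Pood k' x.

Definition cil_pred (WP : forall k : 'I_T, X -> 'I_(n k) -> R)
  (Pood : 'I_T -> X -> R) (k : 'I_T) (x : X) (j : 'I_(n k)) : R :=
  WP k x j * task_pred Pood k x.

Definition H_CIL (WP : forall k : 'I_T, X -> 'I_(n k) -> R)
  (Pood : 'I_T -> X -> R) (x : X) : \bar R :=
  neglog (cil_pred WP Pood x (cls x)).

End Defs.

From mathcomp Require Import all_boot all_order all_algebra.
From mathcomp Require Import all_classical all_reals all_analysis.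
Set Implicit Arguments.
Unset Strict Implicit.
Unset Printing Implicit Defensive.

Import Order.TTheory GRing.Theory Num.Theory.
Local Open Scope ring_scope.

(* With [p] the OOD score of the true task and [S] the sum of all OOD scores,
   the task-id loss is [ln (S / p) <= (S - p) / p].  The OOD bounds give
   [1 / p <= e^delta_k0] and [S - p <= sum_(k != k0) (1 - e^-delta_k)], and the
   loss of the product [WP * task_pred] splits as the sum of the two losses. *)

Lemma neglog_le (R : realType) (p d : R) :
  (neglog p <= d%:E)%E = (0 < p) && (- ln p <= d).
Proof. by rewrite /neglog; case: ifP; rewrite ?lee_fin. Qed.

Lemma neglog_gt0 (R : realType) (p : R) : 0 < p -> neglog p = (- ln p)%:E.
Proof. by rewrite /neglog => ->. Qed.

Lemma lnN_leE (R : realType) (p d : R) :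
  0 < p -> (- ln p <= d) = (expR (- d) <= p).
Proof. by move=> p_gt0; rewrite lerNl -[in RHS](lnK p_gt0) ler_expR. Qed.

Lemma sum_indicator_mul (R : numDomainType) (I : finType) (i0 : I) (F : I -> R) :
  \sum_i (i0 == i)%:R * F i = F i0.
Proof.
under eq_bigr => i _ do rewrite mulr_natl mulrb eq_sym.
by rewrite -big_mkcond big_pred1_eq.
Qed.

Section TaskShare.
Variables (R : realType) (I : finType) (P : I -> R) (i0 : I).
Hypothesis P_ge0 : forall i, 0 <= P i.
Hypothesis P_i0_gt0 : 0 < P i0.

Lemma lnN_share_le :
  - ln (P i0 / \sum_i P i) <= (\sum_(i | i != i0) P i) / P i0.
Proof.
have rest_ge0 : 0 <= (\sum_(i | i != i0) P i) / P i0.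
  by rewrite divr_ge0 ?sumr_ge0 // ltW.
rewrite (bigD1 i0) //= -lnV; last first.
  by rewrite posrE divr_gt0 // ltr_wpDr ?sumr_ge0.
by rewrite invf_div mulrDl divff ?gt_eqF // le_ln1Dx // (lt_le_trans _ rest_ge0).
Qed.

Lemma lnN_share_le_expR (delta : I -> R) :
  P i0 <= 1 -> expR (- delta i0) <= P i0 ->
  (forall i, i != i0 -> P i <= 1 - expR (- delta i)) ->
  - ln (P i0 / \sum_i P i) <= expR (delta i0) * \sum_i (1 - expR (- delta i)).
Proof.
move=> P_i0_le1 P_i0_ge P_le.
apply: (le_trans lnN_share_le); rewrite mulrC ler_pM ?sumr_ge0 //.
- by rewrite invr_ge0 ltW.
- by rewrite -[expR (delta i0)]invrK -expRN lef_pV2 ?posrE ?expR_gt0.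
rewrite [X in _ <= X](bigD1 i0) //= ler_wpDl ?ler_sum // subr_ge0.
exact: le_trans P_i0_ge P_i0_le1.
Qed.

End TaskShare.

Theorem theorem3 (R : realType) (X : Type) (T : nat) (n : 'I_T -> nat)
  (tsk : X -> 'I_T) (cls : forall x : X, 'I_(n (tsk x)))
  (Pood : 'I_T -> X -> R) (WP : forall k : 'I_T, X -> 'I_(n k) -> R)
  (hPood : forall k x, 0 <= Pood k x <= 1)
  (hWP0 : forall k x j, 0 <= WP k x j)
  (hWP1 : forall k x, \sum_(j < n k) WP k x j = 1)
  (x : X) (delta : 'I_T -> R) (eps : R)
  (hOOD : forall k : 'I_T, (H_OOD tsk Pood k x <= (delta k)%:E)%E)
  (hWPx : (H_WP cls WP x <= eps%:E)%E) :
  (H_CIL cls WP Pood x <=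
     (eps + (\sum_(k < T) (tsk x == k)%:R * expR (delta k))
            * (\sum_(k < T) (1 - expR (- delta k))))%:E)%E.
Proof.
set k0 := tsk x; set w := WP k0 x (cls x).
move: (hOOD k0); rewrite /H_OOD eqxx neglog_le => /andP[Pk0_gt0].
rewrite lnN_leE // => Pk0_ge.
have P_le k : k != k0 -> Pood k x <= 1 - expR (- delta k).
  move=> neq_k; have := hOOD k; rewrite /H_OOD eq_sym (negbTE neq_k) neglog_le.
  by case/andP=> q_gt0; rewrite lnN_leE // lerBrDr addrC -lerBrDr.
have /andP[w_gt0 w_le] : (0 < w) && (- ln w <= eps) by rewrite -neglog_le.
have share_gt0 : 0 < Pood k0 x / \sum_k Pood k x.
  rewrite divr_gt0 // (lt_le_trans Pk0_gt0) // (bigD1 k0) //= ler_wpDr //.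
  by rewrite sumr_ge0 // => k _; case/andP: (hPood k x).
rewrite sum_indicator_mul /H_CIL /cil_pred /task_pred.
rewrite (neglog_gt0 (mulr_gt0 w_gt0 share_gt0)).
rewrite lee_fin lnM ?posrE // opprD lerD // lnN_share_le_expR //.
- by move=> k; case/andP: (hPood k x).
- by case/andP: (hPood k0 x).
Qed.
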